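(* Let $F$ be an indexed group with degree map $\deg: F\to\mathbb{Z}$, let $\varphi: F\to G$ be a homomorphism to a group $G$, let $f_1\in F$ have degree one, and let $g\in G$. Then: 1) there exists a homomorphism $\psi: F\to G$ with $\psi(f)=\varphi(f)$ for all $f$ of degree zero and $\psi(f_1)=\varphi(f_1)g$ if and only if $g$ lies in the centraliser $C(\varphi(\ker\deg))$; and such $\psi$, when it exists, is unique; 2) if $H$ is a subgroup of $G$ and $g\in H_\varphi$, then (the homomorphism $\psi$ from 1) exists and) $\psi(f)H=\varphi(f)H$ for all $f\in F$.
   Context: An indexed group is a group $F$ equipped with a surjective homomorphism $\deg: F\to\mathbb{Z}$. For $x,y$ in a group, $x^y=y^{-1}xy$ and $H^y=y^{-1}Hy$; $C(X)$ is the centraliser of $X$. For a subgroup $H\le G$, the $\varphi$-core of $H$ is $H_\varphi=\bigcap_{f\in F}H^{\varphi(f)}\cap C(\{\varphi(f)\mid\deg f=0\})$. *)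

From HB Require Import structures.
From mathcomp Require Import all_boot all_order all_algebra.
From mathcomp Require Export monoid ssrint.

Set Implicit Arguments.
Unset Strict Implicit.
Unset Printing Implicit Defensive.

Import GRing.Theory.

Definition indexed_deg (F : groupType) (deg : F -> int) : Prop :=
  (forall x y : F, deg (x * y)%g = (deg x + deg y)%R) /\
  (forall n : int, exists f : F, deg f = n).

Definition group_hom (F G : groupType) (phi : F -> G) : Prop :=
  monoid.monoid_morphism phi.

Definition centraliser (G : groupType) (X : G -> Prop) : G -> Prop :=
  fun x => forall y, X y -> (x * y = y * x)%g.

Definition image_ker (F G : groupType) (deg : F -> int) (phi : F -> G) : G -> Prop :=
  fun y => exists f : F, deg f = 0%R /\ y = phi f.

Definition in_conj (G : groupType) (H : {pred G}) (y x : G) : Prop :=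
  exists2 h, h \in H & x = (y^-1 * h * y)%g.

Definition phi_core (F G : groupType) (deg : F -> int) (phi : F -> G)
    (H : {pred G}) : G -> Prop :=
  fun x => (forall f : F, in_conj H (phi f) x) /\
           centraliser (image_ker deg phi) x.

Definition lcoset (G : groupType) (x : G) (H : {pred G}) : G -> Prop :=
  fun y => exists2 h, h \in H & y = (x * h)%g.

Definition twisted_ext (F G : groupType) (deg : F -> int) (phi : F -> G)
    (f1 : F) (g : G) (psi : F -> G) : Prop :=
  [/\ group_hom psi,
      (forall f : F, deg f = 0%R -> psi f = phi f) &
      psi f1 = (phi f1 * g)%g].

From HB Require Import structures.
From mathcomp Require Import all_boot all_order all_algebra.
From mathcomp Require Import monoid ssrint.

(* Every f in F factors as k * f1^(deg f) with deg k = 0, so an extension psi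
   is forced to be psi f = phi f * t (deg f), where t n = a^-n (a g)^n and
   a = phi f1. The function t is a cocycle for conjugation by powers of a,
   t (m + n) = t m ^ a^n * t n, and t n is a product of conjugates of g by
   powers of a. Hence psi is multiplicative exactly when every t n centralises
   phi(ker deg), which reduces to g doing so because a normalises phi(ker deg);
   and if g lies in the phi-core of H then every t n lies in H, so psi f and
   phi f define the same left coset of H. *)

Set Implicit Arguments.
Unset Strict Implicit.
Unset Printing Implicit Defensive.

Import GRing.Theory.

Local Open Scope group_scope.

Lemma int_ind_addr1 (P : int -> Prop) :
  P 0%R -> (forall n, P n -> P (n + 1)%R) -> (forall n, P n -> P (n - 1)%R) ->
  forall n, P n.
Proof.
move=> P0 PS PP; elim/int_ind => [|n|n] // IHn.
  by rewrite -addn1 PoszD; apply: PS.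
by rewrite -addn1 PoszD opprD; apply: PP.
Qed.

Section IntegerPowers.

Variable G : groupType.
Implicit Types x : G.

Definition expgz x (n : int) : G :=
  match n with Posz m => x ^+ m | Negz m => x ^- m.+1 end.

Lemma expgz0 x : expgz x 0 = 1. Proof. by []. Qed.

Lemma expgz1 x : expgz x 1 = x. Proof. by []. Qed.

Lemma expgzSr x n : expgz x (n + 1)%R = expgz x n * x.
Proof.
case: n => [m|[|m]].
- by rewrite -PoszD addn1 /= expgSr.
- by rewrite /= expg1 mulVg.
- have -> : (Negz m.+1 + 1)%R = Negz m by rewrite !NegzE addrC -opprB; congr (- _)%R.
  by rewrite /= [x ^+ m.+2]expgS invgM mulgVK.
Qed.

Lemma expgzPr x n : expgz x (n - 1)%R = expgz x n / x.
Proof. by have := expgzSr x (n - 1); rewrite subrK => ->; rewrite mulgK. Qed.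

Lemma expgzD x m n : expgz x (m + n)%R = expgz x m * expgz x n.
Proof.
elim/int_ind_addr1: n => [|n IHn|n IHn]; first by rewrite addr0 mulg1.
  by rewrite addrA !expgzSr IHn mulgA.
by rewrite addrA !expgzPr IHn mulgA.
Qed.

End IntegerPowers.

Section GroupHomomorphisms.

Variables (F G : groupType) (h : F -> G).
Hypothesis h_hom : group_hom h.

Let hM : UMagmaMorphism.type F G :=
  HB.pack_for (UMagmaMorphism.type F G) h (isUMagmaMorphism.Build F G h h_hom).

Lemma group_homV : {morph h : x / x^-1}.
Proof. exact: (gmulfV hM). Qed.

Lemma group_homJ : {morph h : x y / x ^ y}.
Proof. exact: (gmulfJ hM). Qed.

Lemma group_hom_expgz x n : h (expgz x n) = expgz (h x) n.
Proof. by case: n => m /=; [exact: (gmulfXn hM) | exact: (gmulfXVn hM)]. Qed.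

End GroupHomomorphisms.

Section Subgroups.

Variable G : groupType.

Definition is_subgroup (P : G -> Prop) :=
  [/\ P 1, forall x y, P x -> P y -> P (x * y) & forall x, P x -> P x^-1].

Lemma group_closed_subgroup (H : {pred G}) :
  group_closed H -> is_subgroup (fun x => x \in H).
Proof.
by move=> H_gr; split; [exact: H_gr.1 | exact: group_closedM | exact: group_closedV].
Qed.

Lemma centraliser_subgroup (X : G -> Prop) : is_subgroup (centraliser X).
Proof.
split=> [y _|x y cx cy z Xz|x cx z Xz]; first by rewrite mulg1 mul1g.
  by rewrite -mulgA cy // !mulgA cx.
exact/esym/commuteV/esym/cx.
Qed.

Lemma centraliser_conjg (X : G -> Prop) x y :
  (forall z, X z -> X (z ^ y^-1)) -> centraliser X x -> centraliser X (x ^ y).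
Proof.
by move=> XJ cx z Xz; rewrite -(conjgKV y z) -!conjMg (cx _ (XJ _ Xz)).
Qed.

Lemma lcosetMr (H : {pred G}) x t y :
  group_closed H -> t \in H -> lcoset (x * t) H y <-> lcoset x H y.
Proof.
move=> H_gr Ht; split=> [[h Hh ->] | [h Hh ->]].
  by exists (t * h); [exact: group_closedM | rewrite mulgA].
exists (t^-1 * h); last by rewrite mulgA mulgK.
by apply: group_closedM => //; apply: group_closedV.
Qed.

End Subgroups.

Section Twist.

Variables (G : groupType) (a g : G).

Definition twist n := (expgz a n)^-1 * expgz (a * g) n.

Lemma twist0 : twist 0 = 1.
Proof. by rewrite /twist !expgz0 invg1 mulg1. Qed.

Lemma twist1 : twist 1 = g.
Proof. by rewrite /twist !expgz1 mulKg. Qed.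

Lemma twistD m n : twist (m + n)%R = twist m ^ expgz a n * twist n.
Proof. by rewrite /twist !expgzD conjgE invgM !mulgA mulgK. Qed.

Lemma twist_in_subgroup (P : G -> Prop) :
  is_subgroup P -> (forall n, P (g ^ expgz a n)) -> forall n, P (twist n).
Proof.
case=> P1 PM PV Pg; elim/int_ind_addr1 => [|n IHn|n IHn]; first by rewrite twist0.
  by rewrite addrC twistD twist1; apply: PM.
have := twistD 1 (n - 1); rewrite addrC subrK twist1 => tn.
by rewrite -[twist _](mulKg (g ^ expgz a (n - 1))) -tn; apply: PM => //; apply: PV.
Qed.

End Twist.

Section IndexedGroup.

Variables (F G : groupType) (deg : F -> int) (phi : F -> G) (f1 : F).
Hypotheses (degM : forall x y, deg (x * y) = (deg x + deg y)%R)
           (phi_hom : group_hom phi) (deg_f1 : deg f1 = 1%R).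

Local Notation K := (image_ker deg phi).
Local Notation a := (phi f1).

Lemma deg1 : deg 1 = 0%R.
Proof. by apply: (addrI (deg 1)); rewrite -degM mulg1 addr0. Qed.

Lemma degV x : deg x^-1 = (- deg x)%R.
Proof. by apply: (addrI (deg x)); rewrite -degM mulgV deg1 subrr. Qed.

Lemma degJ x y : deg (x ^ y) = deg x.
Proof. by rewrite conjgE !degM degV addrCA addNr addr0. Qed.

Lemma deg_expgz_f1 n : deg (expgz f1 n) = n.
Proof.
elim/int_ind_addr1: n => [|n IHn|n IHn]; first exact: deg1.
  by rewrite expgzSr degM IHn deg_f1.
by rewrite expgzPr degM degV IHn deg_f1.
Qed.

Lemma deg_kernel_part f : deg (f / expgz f1 (deg f)) = 0%R.
Proof. by rewrite degM degV deg_expgz_f1 subrr. Qed.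

Lemma phi_kernel_part f : phi f = phi (f / expgz f1 (deg f)) * expgz a (deg f).
Proof. by rewrite -(group_hom_expgz phi_hom) -phi_hom.2 mulgVK. Qed.

Lemma image_ker_conjg z y : K z -> K (z ^ phi y).
Proof. by case=> k [k0 ->]; exists (k ^ y); rewrite degJ (group_homJ phi_hom). Qed.

Lemma phi_mul_conj_centraliser t y :
  centraliser K t -> phi y * t ^ expgz a (deg y) = t * phi y.
Proof.
move=> ct; rewrite [phi y]phi_kernel_part conjgE !mulgA mulgK.
by rewrite -ct //; exists (y / expgz f1 (deg y)); rewrite deg_kernel_part.
Qed.

Lemma centraliser_twist g n : centraliser K g -> centraliser K (twist a g n).
Proof.
move=> cg; apply: twist_in_subgroup (centraliser_subgroup K) _ n => m.
apply: centraliser_conjg cg => z Kz.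
by rewrite -(group_hom_expgz phi_hom) -(group_homV phi_hom); apply: image_ker_conjg.
Qed.

Definition twisted_hom g f := phi f * twist a g (deg f).

Lemma twisted_hom_ext g :
  centraliser K g -> twisted_ext deg phi f1 g (twisted_hom g).
Proof.
move=> cg; rewrite /twisted_hom; split.
- split; first by rewrite phi_hom.1 deg1 twist0 mulg1.
  move=> x y; rewrite degM twistD phi_hom.2 mulgA -(mulgA (phi x)).
  rewrite phi_mul_conj_centraliser; first by rewrite !mulgA.
  exact: centraliser_twist.
- by move=> f ->; rewrite twist0 mulg1.
- by rewrite deg_f1 twist1.
Qed.

Lemma twisted_ext_eq g psi :
  twisted_ext deg phi f1 g psi -> forall f, psi f = twisted_hom g f.
Proof.
case=> psi_hom psi_phi psi_f1 f; rewrite /twisted_hom [phi f]phi_kernel_part.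
rewrite -[f in psi f](mulgVK (expgz f1 (deg f))) psi_hom.2 psi_phi ?deg_kernel_part //.
by rewrite (group_hom_expgz psi_hom) psi_f1 /twist mulgA mulgK.
Qed.

Lemma centraliser_of_twisted_ext g psi :
  twisted_ext deg phi f1 g psi -> centraliser K g.
Proof.
case=> psi_hom psi_phi psi_f1 _ [k [k0 ->]].
have := psi_phi (k ^ f1^-1); rewrite degJ (group_homJ psi_hom) (group_homJ phi_hom).
rewrite (group_homV psi_hom) (group_homV phi_hom) psi_phi // psi_f1 invgM conjgM.
by move=> /(_ k0) /conjg_inj /esym e; rewrite [RHS]conjgC {2}e conjgKV.
Qed.

Lemma twist_phi_core (H : {pred G}) g n :
  group_closed H -> phi_core deg phi H g -> twist a g n \in H.
Proof.
move=> H_gr [gH _]; apply: twist_in_subgroup (group_closed_subgroup H_gr) _ n => m.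
have [h Hh] := gH (expgz f1 m)^-1.
rewrite (group_homV phi_hom) (group_hom_expgz phi_hom) invgK => ->.
by rewrite conjgE !mulgA mulVg mul1g mulgVK.
Qed.

End IndexedGroup.

Theorem lemma0 (F G : groupType) (deg : F -> int) (phi : F -> G)
    (f1 : F) (g : G) :
  indexed_deg deg -> group_hom phi -> deg f1 = 1%R ->
  (* 1) existence iff g centralises phi(ker deg), and uniqueness *)
  ((exists psi : F -> G, twisted_ext deg phi f1 g psi) <->
      centraliser (image_ker deg phi) g) /\
  (forall psi1 psi2 : F -> G,
      twisted_ext deg phi f1 g psi1 -> twisted_ext deg phi f1 g psi2 ->
      forall f, psi1 f = psi2 f) /\
  (* 2) *)
  (forall H : {pred G}, group_closed H -> phi_core deg phi H g ->
      (exists psi : F -> G, twisted_ext deg phi f1 g psi) /\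
      (forall psi : F -> G, twisted_ext deg phi f1 g psi ->
         forall f : F, forall y : G,
           lcoset (psi f) H y <-> lcoset (phi f) H y)).
Proof.
move=> [degM _] phi_hom deg_f1.
have ext := twisted_hom_ext degM phi_hom deg_f1.
have ext_eq := twisted_ext_eq degM phi_hom deg_f1.
split; [split|split].
- by case=> psi /(centraliser_of_twisted_ext degM phi_hom).
- by move=> cg; exists (twisted_hom deg phi f1 g); apply: ext.
- by move=> psi1 psi2 psi1_ext psi2_ext f; rewrite (ext_eq _ _ psi1_ext) (ext_eq _ _ psi2_ext).
move=> H H_gr coreg; split.
  by exists (twisted_hom deg phi f1 g); apply/ext; case: coreg.
move=> psi psi_ext f y; rewrite (ext_eq _ _ psi_ext).
exact: lcosetMr H_gr (twist_phi_core f1 phi_hom (deg f) H_gr coreg).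
Qed.
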